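(* Let $L$ be a subspace of $\bigwedge^{k}V$ and let $h\in[n]$. Suppose $L$ is monomial with respect to $e_h$, i.e. $L=\big(L\cap\bigwedge^{k}V^{(h)}\big)\oplus\big(L\cap(e_{h}\wedge\bigwedge^{k-1}V^{(h)})\big)$. If $1\leq i<j\leq n$ are distinct from $h$, then \begin{align*} N_{j\to i}L & =N_{j\to i}\Big(L\cap\bigwedge^{k}V^{(h)}\Big)\oplus N_{j\to i}\Big(L\cap\big(e_{h}\wedge\bigwedge^{k-1}V^{(h)}\big)\Big)\\ & =\Big(N_{j\to i}L\cap\bigwedge^{k}V^{(h)}\Big)\oplus\Big(N_{j\to i}L\cap\big(e_{h}\wedge\bigwedge^{k-1}V^{(h)}\big)\Big). \end{align*}
   Context: $\mathbb{F}$ is a field (assumed throughout the paper, for expository purposes, to have characteristic not $2$), $V$ is an $n$-dimensional $\mathbb{F}$-vector space with a fixed basis $e_1,\dots,e_n$, and $\bigwedge V$ its exterior algebra. For $j\in[n]$, $V^{(j)}$ is the span of $\{e_l:l\neq j\}$, and $\bigwedge V^{(j)}$ is viewed as a subalgebra of $\bigwedge V$. Slow shift: for distinct $i,j\in[n]$ and nonzero $m\in\bigwedge^kV$, write uniquely $m=x+e_j\wedge y$ with $x\in\bigwedge^kV^{(j)}$, $y\in\bigwedge^{k-1}V^{(j)}$, and set $N_{j\to i}m=x+e_i\wedge y$ if this is nonzero, and $N_{j\to i}m=e_j\wedge y$ otherwise (the limit as $t\to0$ of the projective action of the linear map $e_j\mapsto e_i+te_j$ fixing the other $e_l$). For a subspace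 $L$ of $\bigwedge^kV$, $N_{j\to i}L$ is the span of $\{N_{j\to i}m:m\in L\setminus\{0\}\}$ (and $N_{j\to i}\{0\}=\{0\}$); it has the same dimension as $L$. *)

(* Exterior algebra of V = F^n with basis e_0..e_{n-1},
   modelled by its standard basis e_S (S ranging over subsets of 'I_n,
   e_S = e_{s_1} /\ ... /\ e_{s_k} with s_1 < ... < s_k). *)
From HB Require Import structures.
From mathcomp Require Import all_boot all_order all_algebra.
Set Implicit Arguments. Unset Strict Implicit. Unset Printing Implicit Defensive.
Import Order.TTheory GRing.Theory.
Local Open Scope ring_scope.

Definition ext (F : fieldType) (n : nat) := {ffun {set 'I_n} -> F^o}.

Section Ext.
Variables (F : fieldType) (n : nat).
Local Notation E := (ext F n).

Definition ebas (S : {set 'I_n}) : E := [ffun T => if T == S then 1 else 0].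
Definition evec (i : 'I_n) : E := ebas [set i].

(* sign of e_S /\ e_T = sgn S T * e_(S :|: T) for disjoint S,T:
   (-1)^(number of inversions (s,t) in S x T with t < s). *)
Definition wsign (S T : {set 'I_n}) : F :=
  (-1) ^+ #|[set p in setX S T | (p.2 < p.1)%N]|.

Definition wedge (x y : E) : E :=
  [ffun U => \sum_(S : {set 'I_n}) \sum_(T : {set 'I_n})
     if [&& [disjoint S & T] & S :|: T == U] then wsign S T * x S * y T else 0].

Definition extk (k : nat) : {vspace E} :=
  <<[seq ebas A | A <- enum [pred A : {set 'I_n} | #|A| == k]]>>%VS.

Definition extk_off (k : nat) (h : 'I_n) : {vspace E} :=
  <<[seq ebas A | A <- enum [pred A : {set 'I_n} | (#|A| == k) && (h \notin A)]]>>%VS.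

(* e_h /\ /\^(k-1) V^(h)  (the zero space when k = 0) *)
Definition ewedge_off (k : nat) (h : 'I_n) : {vspace E} :=
  <<[seq wedge (evec h) (ebas A)
      | A <- enum [pred A : {set 'I_n} | (#|A|.+1 == k) && (h \notin A)]]>>%VS.

(* Unique decomposition m = x + e_j /\ y with x, y in /\V^(j). *)
Definition dec_x (j : 'I_n) (m : E) : E :=
  [ffun T : {set 'I_n} => if j \in T then 0 else m T].
Definition dec_y (j : 'I_n) (m : E) : E :=
  [ffun T : {set 'I_n} => if j \in T then 0 else wsign [set j] T * m (j |: T)].

Definition slow_shift (j i : 'I_n) (m : E) : E :=
  let x := dec_x j m in let y := dec_y j m in
  let c := x + wedge (evec i) y in
  if c != 0 then c else wedge (evec j) y.

(* N_{j -> i} L : the span of { N_{j->i} m : m in L, m <> 0 },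
   represented as a predicate (membership in that span). *)
Definition slow_shift_sp (j i : 'I_n) (L : {vspace E}) (v : E) : Prop :=
  exists s : seq E, (forall m, m \in s -> (m \in L) && (m != 0)) /\
                    v \in <<[seq slow_shift j i m | m <- s]>>%VS.

Definition is_dsum (R P Q : E -> Prop) : Prop :=
  (forall v, R v <-> exists p q, [/\ P p, Q q & v = p + q]) /\
  (forall v, P v -> Q v -> v = 0).

End Ext.

(* Write [m = x + e_j /\ y] and let [A], [B] be the parts of [L] supported on
   basis vectors [e_T] with [h \notin T], resp. [h \in T].  As [i] and [j]
   differ from [h], both the substitution [x + e_i /\ y] and the fallback
   [e_j /\ y] preserve these two supports, and the substitution is additive.
   Hence for [m = a + b] with [a \in A], [b \in B], the substitution of [m]
   vanishes exactly when those of [a] and [b] both do, so the slow shift of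
   [m] is the sum of an element of [N A] and one of [N B]; disjointness of
   the supports makes all the sums direct. *)
From HB Require Import structures.
From mathcomp Require Import all_boot all_order all_algebra.
Set Implicit Arguments. Unset Strict Implicit. Unset Printing Implicit Defensive.
Import GRing.Theory.
Local Open Scope ring_scope.

Lemma span_ind (K : fieldType) (vT : vectType K) (P : vT -> Prop) (X : seq vT) v :
  P 0 -> (forall x y, P x -> P y -> P (x + y)) -> (forall c x, P x -> P (c *: x)) ->
  (forall x, x \in X -> P x) -> v \in <<X>>%VS -> P v.
Proof.
move=> P0 PD PZ; elim: X v => [|x X IHX] v PX.
  by rewrite span_nil memv0 => /eqP->.
rewrite span_cons => /memv_addP[y /vlineP[c ->] [z zX ->]].
apply: PD; first by apply/PZ/PX; rewrite mem_head.
by apply: IHX => // w wX; apply: PX; rewrite in_cons wX orbT.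
Qed.

Section ExteriorCoordinates.
Variables (F : fieldType) (n : nat).
Local Notation E := (ext F n).
Implicit Types (Q : pred {set 'I_n}) (x y v : E).

Lemma ext_sum_ebas v : v = \sum_T v T *: ebas F T.
Proof.
apply/ffunP => U; rewrite sum_ffunE (bigD1 U) //= big1 ?addr0.
  by rewrite !ffunE eqxx; exact: (esym (mulr1 _)).
by move=> T /negbTE TU; rewrite !ffunE eq_sym TU; exact: (mulr0 _).
Qed.

Lemma wsign_neq0 (S T : {set 'I_n}) : wsign F S T != 0.
Proof. by rewrite expf_neq0 // oppr_eq0 oner_eq0. Qed.

Lemma wedge_evecE (a : 'I_n) (y : E) U :
  wedge (evec F a) y U =
  if a \in U then wsign F [set a] (U :\ a) * y (U :\ a) else 0.
Proof.
rewrite ffunE (bigD1 [set a]) //= [X in _ + X]big1 ?addr0; last first.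
  move=> S /negbTE Sa; apply: big1 => T _.
  by rewrite ffunE Sa mulr0 mul0r; case: ifP.
under eq_bigr => T _ do rewrite ffunE eqxx mulr1.
rewrite -big_mkcond /=; case: ifP => aU.
  rewrite (big_pred1 (U :\ a)) // => T /=.
  rewrite disjoints1; apply/andP/eqP => [[aT /eqP <-]|->].
    by rewrite setU1K.
  by rewrite !inE eqxx setD1K.
rewrite big_pred0 // => T /=; apply/negbTE; rewrite disjoints1.
by apply/andP => -[_ /eqP UT]; rewrite -UT setU11 in aU.
Qed.

Lemma wedge_evecD (a : 'I_n) x y :
  wedge (evec F a) (x + y) = wedge (evec F a) x + wedge (evec F a) y.
Proof.
apply/ffunP => U; rewrite wedge_evecE [in RHS]ffunE !wedge_evecE ffunE.
by case: ifP; rewrite ?addr0 // mulrDr.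
Qed.

Lemma wedge_evec_ebas (a : 'I_n) (A : {set 'I_n}) : a \notin A ->
  wedge (evec F a) (ebas F A) = wsign F [set a] A *: ebas F (a |: A).
Proof.
move=> aA; apply/ffunP => U; rewrite wedge_evecE !ffunE.
have [->|UaA] := eqVneq U (a |: A); first by rewrite setU11 setU1K // eqxx.
case: ifP => aU; last by rewrite (_ : _ *: _ = 0) //; exact: (mulr0 _).
have /negbTE-> : U :\ a != A by apply: contraNneq UaA => <-; rewrite setD1K.
by rewrite mulr0; exact: (esym (mulr0 _)).
Qed.

Definition supported (Q : pred {set 'I_n}) v := forall T, ~~ Q T -> v T = 0.

Lemma supported0 Q : supported Q 0.
Proof. by move=> T _; rewrite ffunE. Qed.

Lemma supportedD Q x y : supported Q x -> supported Q y -> supported Q (x + y).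
Proof. by move=> Qx Qy T QT; rewrite ffunE Qx // Qy // addr0. Qed.

Lemma supportedZ Q (c : F) x : supported Q x -> supported Q (c *: x).
Proof. by move=> Qx T QT; rewrite ffunE Qx // scaler0. Qed.

Lemma supported_ebas Q A : Q A -> supported Q (ebas F A).
Proof. by move=> QA T; rewrite ffunE; case: eqP => // ->; rewrite QA. Qed.

Lemma supported_span Q (X : seq E) v :
  (forall x, x \in X -> supported Q x) -> v \in <<X>>%VS -> supported Q v.
Proof. by apply: span_ind; [apply: supported0|apply: supportedD|apply: supportedZ]. Qed.

Lemma supported_memv Q (W : {vspace E}) v :
  (forall T, Q T -> ebas F T \in W) -> supported Q v -> v \in W.
Proof.
move=> QW Qv; rewrite (ext_sum_ebas v); apply: memv_suml => T _.
by case QT: (Q T); [rewrite memvZ ?QW|rewrite Qv ?QT // scale0r mem0v].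
Qed.

Lemma supported_disjoint_eq0 (Q1 Q2 : pred {set 'I_n}) v :
  (forall T, Q1 T -> ~~ Q2 T) -> supported Q1 v -> supported Q2 v -> v = 0.
Proof.
move=> Q12 Q1v Q2v; apply/ffunP => T; rewrite ffunE.
by case Q1T: (Q1 T); [rewrite Q2v ?Q12|rewrite Q1v ?Q1T].
Qed.

Lemma supported_disjoint_add_eq0 (Q1 Q2 : pred {set 'I_n}) x y :
  (forall T, Q1 T -> ~~ Q2 T) -> supported Q1 x -> supported Q2 y ->
  x + y = 0 -> x = 0 /\ y = 0.
Proof.
move=> Q12 Q1x Q2y /eqP; rewrite addr_eq0 => /eqP xNy.
suff x0 : x = 0 by split; last by apply: oppr_inj; rewrite -xNy x0 oppr0.
by apply: (supported_disjoint_eq0 Q12); rewrite // xNy -scaleN1r; apply: supportedZ.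
Qed.

Definition hsets (k : nat) (h : 'I_n) (b : bool) :=
  [pred T : {set 'I_n} | (#|T| == k) && ((h \in T) == b)].

Lemma hsets_disjoint k h T : hsets k h false T -> ~~ hsets k h true T.
Proof. by rewrite !inE; case: (h \in T); rewrite andbF. Qed.

Lemma extk_off_supportedP k h v : v \in extk_off F k h <-> supported (hsets k h false) v.
Proof.
split.
  apply: supported_span => x /mapP[A]; rewrite mem_enum => kA ->.
  by apply: supported_ebas; rewrite inE eqbF_neg.
apply: supported_memv => T; rewrite inE eqbF_neg => kT.
by apply: memv_span; apply/mapP; exists T; rewrite ?mem_enum.
Qed.

Lemma ewedge_off_supportedP k h v :
  v \in ewedge_off F k h <-> supported (hsets k h true) v.
Proof.
split.
  apply: supported_span => x /mapP[A]; rewrite mem_enum inE => /andP[kA hA] ->.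
  rewrite wedge_evec_ebas //; apply/supportedZ/supported_ebas.
  by rewrite inE cardsU1 hA add1n (eqP kA) setU11 !eqxx.
apply: supported_memv => T; rewrite inE eqb_id => /andP[/eqP <- hT].
have -> : ebas F T =
    (wsign F [set h] (T :\ h))^-1 *: wedge (evec F h) (ebas F (T :\ h)).
  by rewrite wedge_evec_ebas ?setD11 // setD1K // scalerA mulVf ?wsign_neq0 ?scale1r.
apply/memvZ/memv_span/mapP; exists (T :\ h) => //.
by rewrite mem_enum inE setD11 andbT (cardsD1 h T) hT.
Qed.

End ExteriorCoordinates.

Section SlowShift.
Variables (F : fieldType) (n : nat) (j i : 'I_n).
Local Notation E := (ext F n).
Local Notation N := (slow_shift_sp j i).
Implicit Types (Q : pred {set 'I_n}) (m v x y : E) (W : {vspace E}).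

Definition shift_subst (m : E) : E := dec_x j m + wedge (evec F i) (dec_y j m).
Definition shift_fallback (m : E) : E := wedge (evec F j) (dec_y j m).

Lemma slow_shiftE m :
  slow_shift j i m = if shift_subst m != 0 then shift_subst m else shift_fallback m.
Proof. by []. Qed.

Lemma dec_xD x y : dec_x j (x + y) = dec_x j x + dec_x j y.
Proof. by apply/ffunP => T; rewrite !ffunE; case: ifP; rewrite ?addr0. Qed.

Lemma dec_yD x y : dec_y j (x + y) = dec_y j x + dec_y j y.
Proof. by apply/ffunP => T; rewrite !ffunE; case: ifP; rewrite ?addr0 // mulrDr. Qed.

Lemma shift_substD x y : shift_subst (x + y) = shift_subst x + shift_subst y.
Proof. by rewrite /shift_subst dec_xD dec_yD wedge_evecD addrACA. Qed.

Lemma shift_fallbackD x y : shift_fallback (x + y) = shift_fallback x + shift_fallback y.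
Proof. by rewrite /shift_fallback dec_yD wedge_evecD. Qed.

Lemma shift_subst0 : shift_subst 0 = 0.
Proof. by apply: (addrI (shift_subst 0)); rewrite -shift_substD !addr0. Qed.

Lemma shift_fallback0 : shift_fallback 0 = 0.
Proof. by apply: (addrI (shift_fallback 0)); rewrite -shift_fallbackD !addr0. Qed.

Definition shift_closed (Q : pred {set 'I_n}) :=
  forall T : {set 'I_n}, j \notin T -> i \notin T -> Q (j |: T) -> Q (i |: T).

Lemma hsets_shift_closed k h b : i != h -> j != h -> shift_closed (hsets k h b).
Proof.
move=> ih jh T jT iT; rewrite !inE !cardsU1 jT iT.
by rewrite (eq_sym h j) (negbTE jh) (eq_sym h i) (negbTE ih).
Qed.

Lemma supported_shift_subst Q m :
  shift_closed Q -> supported Q m -> supported Q (shift_subst m).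
Proof.
move=> closedQ Qm T QT; rewrite ffunE.
have -> : dec_x j m T = 0 by rewrite ffunE; case: ifP => // _; apply: Qm.
rewrite add0r wedge_evecE; case: ifP => // iT; rewrite ffunE.
case: ifP => jTi; first exact: (mulr0 _).
rewrite Qm ?mulr0 //; apply: contra QT => QjT; rewrite -(setD1K iT).
by apply: closedQ; rewrite ?jTi ?setD11.
Qed.

Lemma supported_shift_fallback Q m : supported Q m -> supported Q (shift_fallback m).
Proof.
move=> Qm T QT; rewrite wedge_evecE; case: ifP => // jT.
by rewrite ffunE setD11 setD1K // Qm // !mulr0.
Qed.

Lemma supported_slow_shift Q m :
  shift_closed Q -> supported Q m -> supported Q (slow_shift j i m).
Proof.
move=> closedQ Qm; rewrite slow_shiftE; case: ifP => _.
  exact: supported_shift_subst.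
exact: supported_shift_fallback.
Qed.

Lemma slow_shift_sp0 W : N W 0.
Proof. by exists [::]; split; last exact: mem0v. Qed.

Lemma slow_shift_spD W x y : N W x -> N W y -> N W (x + y).
Proof.
move=> [s [sW xs]] [t [tW yt]]; exists (s ++ t); split.
  by move=> m; rewrite mem_cat => /orP[/sW|/tW].
by rewrite map_cat span_cat memv_add.
Qed.

Lemma slow_shift_spZ W (c : F) x : N W x -> N W (c *: x).
Proof. by move=> [s [sW xs]]; exists s; split; last exact: memvZ. Qed.

Lemma slow_shift_sp_shift W m : m \in W -> m != 0 -> N W (slow_shift j i m).
Proof.
move=> mW m0; exists [:: m]; split; last exact: memv_span1.
by move=> m'; rewrite inE => /eqP->; rewrite mW.
Qed.

Lemma slow_shift_spS (W1 W2 : {vspace E}) v : (W1 <= W2)%VS -> N W1 v -> N W2 v.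
Proof.
move=> /subvP W12 [s [sW vs]]; exists s; split => // m /sW /andP[mW ->].
by rewrite W12.
Qed.

Lemma slow_shift_sp_ind W (P : E -> Prop) :
  P 0 -> (forall x y, P x -> P y -> P (x + y)) -> (forall c x, P x -> P (c *: x)) ->
  (forall m, m \in W -> m != 0 -> P (slow_shift j i m)) -> forall v, N W v -> P v.
Proof.
move=> P0 PD PZ PW v [s [sW vs]]; apply: span_ind vs => // _ /mapP[m ms ->].
by have /andP[] := sW m ms; apply: PW.
Qed.

Lemma supported_slow_shift_sp Q W v :
  shift_closed Q -> (forall m, m \in W -> supported Q m) -> N W v -> supported Q v.
Proof.
move=> closedQ QW; apply: slow_shift_sp_ind => //.
- exact: supported0.
- exact: supportedD.
- exact: supportedZ.
by move=> m /QW Qm _; apply: supported_slow_shift.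
Qed.

Lemma slow_shift_sp_parts W m :
  m \in W -> N W (shift_subst m) /\ (shift_subst m = 0 -> N W (shift_fallback m)).
Proof.
move=> mW; have [->|m0] := eqVneq m 0.
  by rewrite shift_subst0 shift_fallback0; split=> [|_]; apply: slow_shift_sp0.
have := slow_shift_sp_shift mW m0; rewrite slow_shiftE.
case: eqP => [->|nz] /= Nm; last by split=> // /nz.
by split=> [|_ //]; apply: slow_shift_sp0.
Qed.

Section MonomialSubspace.
Variables (Q1 Q2 : pred {set 'I_n}) (W1 W2 L : {vspace E}).
Hypotheses (closedQ1 : shift_closed Q1) (closedQ2 : shift_closed Q2).
Hypothesis Q12 : forall T, Q1 T -> ~~ Q2 T.
Hypotheses (W1P : forall v, v \in W1 <-> supported Q1 v)
           (W2P : forall v, v \in W2 <-> supported Q2 v).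
Hypothesis L_monomial : (L :&: W1 + L :&: W2)%VS = L.

Local Notation A := (L :&: W1)%VS.
Local Notation B := (L :&: W2)%VS.

Lemma supported_shift_sp_cap1 v : N A v -> supported Q1 v.
Proof. by apply: supported_slow_shift_sp => // m /memv_capP[_ /W1P]. Qed.

Lemma supported_shift_sp_cap2 v : N B v -> supported Q2 v.
Proof. by apply: supported_slow_shift_sp => // m /memv_capP[_ /W2P]. Qed.

Lemma slow_shift_monomial_split m : m \in L -> m != 0 ->
  exists p q, [/\ N A p, N B q & slow_shift j i m = p + q].
Proof.
rewrite -{1}L_monomial => /memv_addP[a aA [b bB ->]] _.
have Q1a : supported Q1 a by case/memv_capP: aA => _ /W1P.
have Q2b : supported Q2 b by case/memv_capP: bB => _ /W2P.
have [Na_subst Na_fallback] := slow_shift_sp_parts aA.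
have [Nb_subst Nb_fallback] := slow_shift_sp_parts bB.
rewrite slow_shiftE shift_substD shift_fallbackD.
case: eqP => [ab0|_] /=; last by exists (shift_subst a), (shift_subst b).
have [a0 b0] := supported_disjoint_add_eq0 Q12
  (supported_shift_subst closedQ1 Q1a) (supported_shift_subst closedQ2 Q2b) ab0.
exists (shift_fallback a), (shift_fallback b).
by split; [apply: Na_fallback|apply: Nb_fallback|].
Qed.

Lemma slow_shift_sp_monomial_split v :
  N L v -> exists p q, [/\ N A p, N B q & v = p + q].
Proof.
move: v; apply: slow_shift_sp_ind; last exact: slow_shift_monomial_split.
- by exists 0, 0; rewrite addr0; split=> //; apply: slow_shift_sp0.
- move=> _ _ [p1 [q1 [Ap1 Bq1 ->]]] [p2 [q2 [Ap2 Bq2 ->]]].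
  by exists (p1 + p2), (q1 + q2); rewrite addrACA; split=> //; apply: slow_shift_spD.
- move=> c _ [p [q [Ap Bq ->]]].
  by exists (c *: p), (c *: q); rewrite scalerDr; split=> //; apply: slow_shift_spZ.
Qed.

Lemma slow_shift_sp_dsum : is_dsum (N L) (N A) (N B).
Proof.
split=> [v|v Ap Bq]; last first.
  exact: supported_disjoint_eq0 Q12 (supported_shift_sp_cap1 Ap) (supported_shift_sp_cap2 Bq).
split; first exact: slow_shift_sp_monomial_split.
case=> p [q [Ap Bq ->]]; apply: slow_shift_spD.
  exact: slow_shift_spS (capvSl L W1) Ap.
exact: slow_shift_spS (capvSl L W2) Bq.
Qed.

Lemma slow_shift_sp_dsum_cap :
  is_dsum (N L) (fun v => N L v /\ v \in W1) (fun v => N L v /\ v \in W2).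
Proof.
split=> [v|v [_ /W1P Q1v] [_ /W2P Q2v]]; last exact: supported_disjoint_eq0 Q12 Q1v Q2v.
split=> [/slow_shift_sp_monomial_split[p [q [Ap Bq ->]]]|[p [q [[Lp _] [Lq _] ->]]]].
  exists p, q; split=> //.
    by split; [apply: slow_shift_spS (capvSl L W1) Ap|apply/W1P/supported_shift_sp_cap1].
  by split; [apply: slow_shift_spS (capvSl L W2) Bq|apply/W2P/supported_shift_sp_cap2].
exact: slow_shift_spD.
Qed.

End MonomialSubspace.

End SlowShift.

Theorem lemma3p4 (F : fieldType) (n : nat) (k : nat)
  (L : {vspace ext F n}) (h i j : 'I_n) :
  (2 \notin [pchar F])%N ->
  (L <= extk F n k)%VS ->
  (L :&: extk_off F k h + L :&: ewedge_off F k h)%VS = L ->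
  directv (L :&: extk_off F k h + L :&: ewedge_off F k h)%VS ->
  (i < j)%N -> i != h -> j != h ->
  is_dsum (slow_shift_sp j i L)
          (slow_shift_sp j i (L :&: extk_off F k h)%VS)
          (slow_shift_sp j i (L :&: ewedge_off F k h)%VS)
  /\
  is_dsum (slow_shift_sp j i L)
          (fun v => slow_shift_sp j i L v /\ v \in extk_off F k h)
          (fun v => slow_shift_sp j i L v /\ v \in ewedge_off F k h).
Proof.
move=> _ _ L_monomial _ _ ih jh.
have closed b : shift_closed j i (hsets k h b) by exact: hsets_shift_closed.
have disj := @hsets_disjoint n k h.
have W1P := @extk_off_supportedP F n k h; have W2P := @ewedge_off_supportedP F n k h.
split; [exact: slow_shift_sp_dsum (closed _) (closed _) disj W1P W2P L_monomial
       |exact: slow_shift_sp_dsum_cap (closed _) (closed _) disj W1P W2P L_monomial].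
Qed.
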